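(* Let $M$ and $N$ be weight sequences satisfying $\mu_k\le\nu_k$ for all $k$ and $$\exists C>0\ \forall k\in\mathbb{N}_{>0}:\ \sum_{\ell\ge k}\frac1{\nu_\ell}\le C\frac{k}{\mu_k}.$$ Then there is $C'>0$ such that $\int_1^\infty\frac{\omega_N(tu)}{u^2}du\le C'\omega_M(t)+C'$ for all $t>0$.
   Context: A weight sequence is given by an increasing sequence $1=\mu_0\le\mu_1\le\cdots$ via $M_k=\mu_0\cdots\mu_k$, with $M_k^{1/k}\to\infty$; analogously $\nu\leftrightarrow N$. $\omega_M(t)=\sup_{k\in\mathbb{N}}\log(t^k/M_k)$ for $t>0$. *)

From Stdlib Require Import Reals Lra ClassicalEpsilon.
Open Scope R_scope.

Fixpoint Mseq (mu : nat -> R) (k : nat) : R :=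
  match k with
  | O => mu O
  | S j => Mseq mu j * mu (S j)
  end.

Definition weight_seq (mu : nat -> R) : Prop :=
  mu O = 1 /\
  (forall k, mu k <= mu (S k)) /\
  cv_infty (fun k => Rpower (Mseq mu k) (/ INR k)).

Definition Rsup (E : R -> Prop) : R :=
  epsilon (inhabits 0) (fun s => is_lub E s).

Definition omega (mu : nat -> R) (t : R) : R :=
  Rsup (fun y => exists k : nat, y = ln (t ^ k / Mseq mu k)).

Definition improper_int_1_inf (f : R -> R) (L : R) : Prop :=
  (forall X, 1 <= X -> inhabited (Riemann_integrable f 1 X)) /\
  (forall eps, 0 < eps -> exists X0, 1 <= X0 /\
     forall X (pr : Riemann_integrable f 1 X), X0 <= X ->
       Rabs (RiemannInt pr - L) < eps).

From Stdlib Require Import Reals Lra Lia ClassicalEpsilon Classical.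
From Coquelicot Require Import Coquelicot.
Open Scope R_scope.

(* Since 1 = nu_0 <= nu_1 <= ..., omega_N(s) is the finite sum of ln+ (s / nu_j)
   over j >= 1, so the integral can be taken term by term, and
   int_1^oo ln+ (a u) / u^2 du <= min (a, ln+ a + 1).  Let k be the last index
   with mu_k <= t / e.  For j <= k we have ln (t / mu_j) >= 1 and nu_j >= mu_j,
   so the term j is at most 2 ln (t / mu_j); these add up to
   2 ln (t^k / M_k) <= 2 omega_M(t).  The remaining terms add up to at most
   t sum_{j > k} 1/nu_j <= C (k + 1) t / mu_(k+1) <= C e (k + 1), and
   k <= ln (t^k / M_k) <= omega_M(t). *)

Definition ln_plus (y : R) : R := Rmax 0 (ln y).

Lemma ln_plus_ge0 y : 0 <= ln_plus y.
Proof. apply Rmax_l. Qed.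

Lemma ln_le_ln_plus y : ln y <= ln_plus y.
Proof. apply Rmax_r. Qed.

Lemma ln_plus_le y z : ln y <= z -> 0 <= z -> ln_plus y <= z.
Proof. intros; apply Rmax_lub; assumption. Qed.

Lemma ln_ge0 y : 1 <= y -> 0 <= ln y.
Proof. intro Hy. rewrite <- ln_1. apply ln_le; lra. Qed.

Lemma ln_le0 y : 0 < y -> y <= 1 -> ln y <= 0.
Proof. intros Hy Hy1. rewrite <- ln_1. apply ln_le; lra. Qed.

Lemma ln_plus_eq_ln y : 1 <= y -> ln_plus y = ln y.
Proof. intro Hy. apply Rmax_right, ln_ge0, Hy. Qed.

Lemma ln_plus_eq0 y : 0 < y -> y <= 1 -> ln_plus y = 0.
Proof. intros Hy Hy1. apply Rmax_left, ln_le0; assumption. Qed.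

Lemma continuous_ln_plus y : 0 < y -> continuous ln_plus y.
Proof.
  intro Hy.
  apply (continuous_ext (fun x => (ln x + Rabs (ln x)) / 2)).
  { intro x. unfold ln_plus, Rmax.
    destruct (Rle_dec 0 (ln x)).
    - rewrite Rabs_pos_eq by assumption. lra.
    - rewrite Rabs_left by lra. lra. }
  apply (continuous_mult (fun x => ln x + Rabs (ln x)) (fun _ => / 2));
    [| apply continuous_const].
  apply (continuous_plus ln (fun x => Rabs (ln x))).
  - apply continuous_ln, Hy.
  - apply continuous_Rabs_comp, continuous_ln, Hy.
Qed.
Fixpoint sum_from1 (f : nat -> R) (n : nat) : R :=
  match n with
  | O => 0
  | S k => sum_from1 f k + f (S k)
  end.

Lemma sum_from1_le f g n :
  (forall j, (1 <= j <= n)%nat -> f j <= g j) -> sum_from1 f n <= sum_from1 g n.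
Proof.
  induction n as [|n IH]; intro Hfg; simpl; [lra|].
  assert (sum_from1 f n <= sum_from1 g n) by (apply IH; intros; apply Hfg; lia).
  specialize (Hfg (S n) ltac:(lia)). lra.
Qed.

Lemma sum_from1_ext f g n :
  (forall j, (1 <= j <= n)%nat -> f j = g j) -> sum_from1 f n = sum_from1 g n.
Proof.
  intro Hfg. apply Rle_antisym; apply sum_from1_le; intros j Hj;
    rewrite (Hfg j Hj); lra.
Qed.

Lemma sum_from1_scal c f n :
  sum_from1 (fun j => c * f j) n = c * sum_from1 f n.
Proof. induction n as [|n IH]; simpl; [ring|]. rewrite IH. ring. Qed.

Lemma sum_from1_const c n : sum_from1 (fun _ => c) n = INR n * c.
Proof. induction n as [|n IH]; simpl sum_from1; [simpl; ring|]. rewrite IH, S_INR. ring. Qed.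

Lemma sum_from1_le_mono f n m :
  (forall j, 0 <= f j) -> (n <= m)%nat -> sum_from1 f n <= sum_from1 f m.
Proof.
  intros Hf Hnm. induction Hnm as [|m _ IH]; simpl; [lra|].
  specialize (Hf (S m)). lra.
Qed.

Lemma sum_from1_shift f k m :
  sum_from1 f (S k + m) = sum_from1 f k + sum_f_R0 (fun j => f (S k + j)%nat) m.
Proof.
  induction m as [|m IH].
  - rewrite Nat.add_0_r. simpl. rewrite Nat.add_0_r. reflexivity.
  - replace (S k + S m)%nat with (S (S k + m)) by lia.
    change (sum_from1 f (S (S k + m))) with (sum_from1 f (S k + m) + f (S (S k + m))).
    rewrite IH. simpl sum_f_R0.
    replace (k + S m)%nat with (S k + m)%nat by lia. ring.
Qed.

Lemma sum_from1_le_head_tail f k s :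
  (forall j, 0 <= f j) ->
  (forall m, sum_f_R0 (fun j => f (S k + j)%nat) m <= s) ->
  forall n, sum_from1 f n <= sum_from1 f k + s.
Proof.
  intros Hf Htail n.
  pose proof (sum_from1_le_mono f n (S k + n) Hf ltac:(lia)) as Hmono.
  rewrite sum_from1_shift in Hmono. specialize (Htail n). lra.
Qed.

Lemma sum_from1_stable f J :
  (forall j, 0 <= f j) -> (forall j, (J < j)%nat -> f j = 0) ->
  forall n, sum_from1 f n <= sum_from1 f J.
Proof.
  intros Hf Hzero n. induction n as [|n IH].
  - apply (sum_from1_le_mono f 0 J Hf). lia.
  - destruct (Nat.le_gt_cases (S n) J).
    + apply sum_from1_le_mono; assumption.
    + simpl. rewrite Hzero by lia. lra.
Qed.

Lemma Rsup_eq (E : R -> Prop) (l : R) : is_lub E l -> Rsup E = l.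
Proof.
  intro Hl. apply (is_lub_u E); [|exact Hl].
  exact (epsilon_spec (inhabits 0) (is_lub E) (ex_intro _ l Hl)).
Qed.

Definition omega_trunc (w : nat -> R) (s : R) (J : nat) : R :=
  sum_from1 (fun j => ln_plus (s / w j)) J.

Section WeightSequence.

Variable w : nat -> R.
Hypothesis w_0 : w O = 1.
Hypothesis w_le_S : forall k, w k <= w (S k).

Lemma weight_ge1 k : 1 <= w k.
Proof. induction k as [|k IH]; [rewrite w_0; lra|]. specialize (w_le_S k). lra. Qed.

Lemma weight_le i j : (i <= j)%nat -> w i <= w j.
Proof. intro Hij. induction Hij as [|j _ IH]; [lra|]. specialize (w_le_S j). lra. Qed.

Lemma Mseq_pos k : 0 < Mseq w k.
Proof.
  induction k as [|k IH]; simpl; [rewrite w_0; lra|].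
  pose proof (weight_ge1 (S k)). nra.
Qed.

Lemma ln_pow_div_Mseq s k :
  0 < s -> ln (s ^ k / Mseq w k) = sum_from1 (fun j => ln (s / w j)) k.
Proof.
  intro Hs. induction k as [|k IH].
  - simpl. rewrite w_0. replace (1 / 1) with 1 by field. apply ln_1.
  - simpl sum_from1. rewrite <- IH.
    pose proof (Mseq_pos k). pose proof (weight_ge1 (S k)).
    assert (0 < s ^ k) by (apply pow_lt; lra).
    rewrite <- ln_mult by (apply Rdiv_lt_0_compat; lra).
    f_equal. simpl. field. lra.
Qed.

Lemma ln_pow_div_Mseq_le_trunc s k :
  0 < s -> ln (s ^ k / Mseq w k) <= omega_trunc w s k.
Proof.
  intro Hs. rewrite ln_pow_div_Mseq by assumption.
  apply sum_from1_le. intros. apply ln_le_ln_plus.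
Qed.

Lemma ln_plus_div_weight_eq0 s j : 0 < s -> s <= w j -> ln_plus (s / w j) = 0.
Proof.
  intros Hs Hsw. pose proof (weight_ge1 j).
  apply ln_plus_eq0; [apply Rdiv_lt_0_compat; lra|].
  apply (Rdiv_le_1 s (w j)); lra.
Qed.

Lemma omega_trunc_stable s J :
  0 < s -> (forall j, (J < j)%nat -> s <= w j) ->
  forall n, omega_trunc w s n <= omega_trunc w s J.
Proof.
  intros Hs HJ. apply sum_from1_stable; [intro; apply ln_plus_ge0|].
  intros j Hj. apply ln_plus_div_weight_eq0; auto.
Qed.

(* The truncated sum is [ln (s^k / M_k)] for [k] the number of weights [<= s]. *)
Lemma omega_trunc_attained s J :
  0 < s -> exists k, ln (s ^ k / Mseq w k) = omega_trunc w s J.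
Proof.
  intro Hs. induction J as [|J [k Hk]].
  - exists O. simpl. rewrite w_0. replace (1 / 1) with 1 by field. apply ln_1.
  - destruct (Rle_lt_dec (w (S J)) s) as [Hle | Hlt].
    + exists (S J). rewrite ln_pow_div_Mseq by assumption.
      apply sum_from1_ext. intros j Hj. symmetry. apply ln_plus_eq_ln.
      pose proof (weight_ge1 j). pose proof (weight_le j (S J) ltac:(lia)).
      apply (Rle_div_r 1 s (w j)); lra.
    + exists k. rewrite Hk. unfold omega_trunc. simpl sum_from1.
      rewrite ln_plus_div_weight_eq0 by lra. ring.
Qed.

Lemma omega_eq_trunc s J :
  0 < s -> (forall j, (J < j)%nat -> s <= w j) -> omega w s = omega_trunc w s J.
Proof.
  intros Hs HJ. apply Rsup_eq. split.
  - intros y [k ->].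
    pose proof (ln_pow_div_Mseq_le_trunc s k Hs).
    pose proof (omega_trunc_stable s J Hs HJ k). lra.
  - intros b Hb. destruct (omega_trunc_attained s J Hs) as [k <-].
    apply Hb. exists k. reflexivity.
Qed.

Hypothesis w_unbounded : forall B, exists k, B < w k.

Lemma weight_eventually_ge B : exists J, forall j, (J < j)%nat -> B <= w j.
Proof.
  destruct (w_unbounded B) as [k Hk]. exists k. intros j Hj.
  pose proof (weight_le k j ltac:(lia)). lra.
Qed.

Lemma omega_eq_trunc_uniform S :
  exists J, forall s, 0 < s <= S -> omega w s = omega_trunc w s J.
Proof.
  destruct (weight_eventually_ge S) as [J HJ]. exists J. intros s Hs.
  apply omega_eq_trunc; [lra|]. intros j Hj. specialize (HJ j Hj). lra.
Qed.

Lemma ln_pow_div_Mseq_le_omega s k : 0 < s -> ln (s ^ k / Mseq w k) <= omega w s.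
Proof.
  intro Hs. destruct (weight_eventually_ge s) as [J HJ].
  rewrite (omega_eq_trunc s J Hs HJ).
  pose proof (ln_pow_div_Mseq_le_trunc s k Hs).
  pose proof (omega_trunc_stable s J Hs HJ k). lra.
Qed.

Lemma omega_ge0 s : 0 < s -> 0 <= omega w s.
Proof.
  intro Hs. pose proof (ln_pow_div_Mseq_le_omega s 0 Hs) as H0.
  rewrite ln_pow_div_Mseq in H0 by assumption. exact H0.
Qed.

Lemma weight_split c :
  exists k, (forall j, (1 <= j <= k)%nat -> w j <= c) /\ c < w (S k).
Proof.
  apply NNPP. intro Hnone.
  assert (Hall : forall n j, (1 <= j <= n)%nat -> w j <= c).
  { induction n as [|n IH]; intros j Hj; [lia|].
    destruct (Nat.eq_dec j (S n)) as [->|]; [|apply IH; lia].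
    apply Rnot_lt_le. intro Hlt. apply Hnone. exists n.
    split; [intros i Hi; apply IH; lia | exact Hlt]. }
  destruct (w_unbounded c) as [k Hk].
  specialize (Hall (S k) (S k) ltac:(lia)). specialize (w_le_S k). lra.
Qed.

End WeightSequence.

Lemma weight_seq_unbounded w : weight_seq w -> forall B, exists k, B < w k.
Proof.
  intros [w_0 [w_le_S w_root]] B. apply NNPP. intro Hnone.
  assert (Hbd : forall k, w k <= B).
  { intro k. apply Rnot_lt_le. intro. apply Hnone. eauto. }
  assert (HB : 1 <= B) by (rewrite <- w_0; apply Hbd).
  assert (HM : forall k, Mseq w k <= B ^ k).
  { induction k as [|k IH]; simpl; [rewrite w_0; lra|].
    rewrite Rmult_comm. apply Rmult_le_compat; auto.
    - pose proof (weight_ge1 w w_0 w_le_S (S k)). lra.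
    - apply Rlt_le, (Mseq_pos w w_0 w_le_S). }
  destruct (w_root B) as [N HN]. specialize (HN (S N) ltac:(lia)).
  assert (Rpower (Mseq w (S N)) (/ INR (S N)) <= B).
  { replace B with (Rpower (B ^ S N) (/ INR (S N))).
    2: { rewrite <- Rpower_pow, Rpower_mult, Rinv_r, Rpower_1 by
           (try apply not_0_INR; lia || lra). reflexivity. }
    apply Rle_Rpower_l.
    - apply Rlt_le, Rinv_0_lt_compat, lt_0_INR. lia.
    - split; [apply (Mseq_pos w w_0 w_le_S) | apply HM]. }
  lra.
Qed.

Lemma continuous_div_sq (f : R -> R) u :
  continuous f u -> 0 < u -> continuous (fun u => f u / u ^ 2) u.
Proof.
  intros Hf Hu. apply (continuous_mult f (fun u => / u ^ 2)); [exact Hf|].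
  apply continuous_Rinv_comp; [|apply pow_nonzero; lra].
  apply (continuous_mult (fun u => u) (fun u => u * 1)); [apply continuous_id|].
  apply (continuous_mult (fun u => u) (fun _ => 1));
    [apply continuous_id | apply continuous_const].
Qed.

Lemma continuous_scale (g : R -> R) a u :
  continuous g (a * u) -> continuous (fun u => g (a * u)) u.
Proof.
  intro Hg. apply (continuous_comp (fun u => a * u) g); [|exact Hg].
  apply (continuous_mult (fun _ => a) (fun u => u));
    [apply continuous_const | apply continuous_id].
Qed.

Section LnPlusScaled.

Variable a : R.
Hypothesis a_pos : 0 < a.

Lemma ex_RInt_ln_plus_scaled p q :
  0 < p -> p <= q -> ex_RInt (fun u => ln_plus (a * u) / u ^ 2) p q.
Proof.
  intros Hp Hpq. apply (@ex_RInt_continuous R_CompleteNormedModule).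
  intros u Hu. rewrite Rmin_left, Rmax_right in Hu by lra.
  apply continuous_div_sq; [|lra].
  apply continuous_scale, continuous_ln_plus. nra.
Qed.

Lemma RInt_ln_scaled_div_sq p q :
  0 < p -> p <= q ->
  RInt (fun u => ln (a * u) / u ^ 2) p q = (ln (a * p) + 1) / p - (ln (a * q) + 1) / q.
Proof.
  intros Hp Hpq. apply is_RInt_unique.
  replace ((ln (a * p) + 1) / p - (ln (a * q) + 1) / q)
    with (minus (- (ln (a * q) + 1) / q) (- (ln (a * p) + 1) / p))
    by (unfold minus, plus, opp; simpl; field; split; lra).
  apply (is_RInt_derive (fun u => - (ln (a * u) + 1) / u));
    intros u Hu; rewrite Rmin_left, Rmax_right in Hu by lra.
  - auto_derive; [repeat split; nra|]. field. split; nra.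
  - apply continuous_div_sq; [|lra].
    apply continuous_scale, continuous_ln. nra.
Qed.

Lemma RInt_ln_plus_scaled_eq0 p q :
  0 < p -> p <= q -> a * q <= 1 -> RInt (fun u => ln_plus (a * u) / u ^ 2) p q = 0.
Proof.
  intros Hp Hpq Hq. rewrite (RInt_ext _ (fun _ => 0)).
  - rewrite RInt_const. unfold scal; simpl; unfold mult; simpl. ring.
  - intros u Hu. rewrite Rmin_left, Rmax_right in Hu by lra.
    rewrite ln_plus_eq0 by nra. apply Rdiv_0_l.
Qed.

Lemma RInt_ln_plus_scaled_le p q :
  0 < p -> p <= q -> 1 <= a * p ->
  RInt (fun u => ln_plus (a * u) / u ^ 2) p q <= (ln (a * p) + 1) / p.
Proof.
  intros Hp Hpq Hap.
  rewrite (RInt_ext _ (fun u => ln (a * u) / u ^ 2)).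
  - rewrite RInt_ln_scaled_div_sq by assumption.
    assert (0 <= (ln (a * q) + 1) / q).
    { apply Rdiv_le_0_compat; [|lra]. pose proof (ln_ge0 (a * q) ltac:(nra)). lra. }
    lra.
  - intros u Hu. rewrite Rmin_left, Rmax_right in Hu by lra.
    rewrite ln_plus_eq_ln by nra. reflexivity.
Qed.

Lemma RInt_ln_plus_scaled_bound X :
  1 <= X ->
  RInt (fun u => ln_plus (a * u) / u ^ 2) 1 X <= a /\
  RInt (fun u => ln_plus (a * u) / u ^ 2) 1 X <= ln_plus a + 1.
Proof.
  intro HX. destruct (Rle_lt_dec 1 a) as [Ha1 | Ha1].
  - pose proof (RInt_ln_plus_scaled_le 1 X ltac:(lra) HX ltac:(lra)) as Hle.
    rewrite Rmult_1_r, Rdiv_1_r in Hle. rewrite ln_plus_eq_ln by assumption.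
    pose proof (exp_ineq1_le (ln a)) as Hexp. rewrite exp_ln in Hexp by lra.
    split; lra.
  - rewrite (ln_plus_eq0 a) by lra.
    destruct (Rle_lt_dec (a * X) 1) as [HaX | HaX].
    { rewrite RInt_ln_plus_scaled_eq0 by lra. lra. }
    (* the integrand vanishes on [1, 1/a] *)
    assert (Hinv : 1 <= / a <= X).
    { split; [rewrite <- Rinv_1; apply Rinv_le_contravar; lra|].
      apply (Rmult_le_reg_l a); [lra|]. rewrite Rinv_r; lra. }
    rewrite <- (RInt_Chasles _ 1 (/ a) X) by (apply ex_RInt_ln_plus_scaled; lra).
    rewrite RInt_ln_plus_scaled_eq0 by (try rewrite Rinv_r; lra).
    pose proof (RInt_ln_plus_scaled_le (/ a) X ltac:(lra) ltac:(lra)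
                  ltac:(rewrite Rinv_r; lra)) as Hle.
    rewrite Rinv_r, ln_1, Rplus_0_l in Hle by lra.
    replace (1 / / a) with a in Hle by (field; lra).
    change (plus 0 ?y) with (0 + y). split; lra.
Qed.

End LnPlusScaled.

Lemma ex_RInt_sum_from1 (F : nat -> R -> R) p q n :
  (forall j, ex_RInt (F j) p q) -> ex_RInt (fun u => sum_from1 (fun j => F j u) n) p q.
Proof.
  intro HF. induction n as [|n IH]; simpl.
  - apply ex_RInt_const.
  - apply (ex_RInt_plus (fun u => sum_from1 (fun j => F j u) n) (F (S n)));
      [exact IH | apply HF].
Qed.

Lemma RInt_sum_from1 (F : nat -> R -> R) p q n :
  (forall j, ex_RInt (F j) p q) ->
  RInt (fun u => sum_from1 (fun j => F j u) n) p q = sum_from1 (fun j => RInt (F j) p q) n.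
Proof.
  intro HF. induction n as [|n IH]; simpl.
  - rewrite RInt_const. unfold scal; simpl; unfold mult; simpl. ring.
  - rewrite (RInt_plus (fun u => sum_from1 (fun j => F j u) n) (F (S n)));
      [| apply ex_RInt_sum_from1, HF | apply HF].
    rewrite IH. reflexivity.
Qed.

Section TruncatedIntegral.

Variables (w : nat -> R) (t : R).
Hypothesis w_pos : forall j, 0 < w j.
Hypothesis t_pos : 0 < t.

Let term j u := ln_plus (t / w j * u) / u ^ 2.

Lemma omega_trunc_div_sq u J :
  0 < u -> omega_trunc w (t * u) J / u ^ 2 = sum_from1 (fun j => term j u) J.
Proof.
  intro Hu. unfold omega_trunc, term, Rdiv at 1.
  rewrite Rmult_comm, <- sum_from1_scal. apply sum_from1_ext. intros j _.
  replace (t / w j * u) with (t * u / w j) by (specialize (w_pos j); field; lra).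
  unfold Rdiv at 2. ring.
Qed.

Lemma ex_RInt_term j X : 1 <= X -> ex_RInt (term j) 1 X.
Proof.
  intro HX. apply ex_RInt_ln_plus_scaled; [|lra|exact HX].
  apply Rdiv_lt_0_compat; [exact t_pos | apply w_pos].
Qed.

Lemma RInt_omega_trunc J X :
  1 <= X ->
  ex_RInt (fun u => omega_trunc w (t * u) J / u ^ 2) 1 X /\
  RInt (fun u => omega_trunc w (t * u) J / u ^ 2) 1 X
    = sum_from1 (fun j => RInt (term j) 1 X) J.
Proof.
  intro HX.
  assert (Hext : forall u, Rmin 1 X < u < Rmax 1 X ->
            sum_from1 (fun j => term j u) J = omega_trunc w (t * u) J / u ^ 2).
  { intros u Hu. rewrite Rmin_left, Rmax_right in Hu by lra.
    symmetry. apply omega_trunc_div_sq. lra. }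
  split.
  - apply (ex_RInt_ext _ _ _ _ Hext), ex_RInt_sum_from1.
    intro j. apply ex_RInt_term, HX.
  - rewrite <- (RInt_ext _ _ _ _ Hext). apply RInt_sum_from1.
    intro j. apply ex_RInt_term, HX.
Qed.

End TruncatedIntegral.

Lemma improper_int_of_bounded (g : R -> R) (B : R) :
  (forall X, 1 <= X -> ex_RInt g 1 X) ->
  (forall u, 1 <= u -> 0 <= g u) ->
  (forall X, 1 <= X -> RInt g 1 X <= B) ->
  exists L, improper_int_1_inf g L /\ L <= B.
Proof.
  intros Hex Hpos Hbd.
  assert (Hmono : forall X Y, 1 <= X <= Y -> RInt g 1 X <= RInt g 1 Y).
  { intros X Y HXY.
    assert (HXY' : ex_RInt g X Y)
      by (apply (ex_RInt_Chasles_2 g 1); [lra | apply Hex; lra]).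
    rewrite <- (RInt_Chasles g 1 X Y); [| apply Hex; lra | exact HXY'].
    assert (0 <= RInt g X Y) by (apply RInt_ge_0; auto; [lra | intros; apply Hpos; lra]).
    change (plus ?x ?y) with (x + y). lra. }
  set (E := fun y => exists X, 1 <= X /\ y = RInt g 1 X).
  destruct (completeness E) as [L [HLub HLlub]].
  { exists B. intros y [X [HX ->]]. apply Hbd, HX. }
  { exists (RInt g 1 1). exists 1. split; [lra | reflexivity]. }
  exists L. split; [split|].
  - intros X HX. constructor. apply ex_RInt_Reals_0, Hex, HX.
  - intros eps Heps.
    assert (HX0 : exists X0, 1 <= X0 /\ L - eps < RInt g 1 X0).
    { apply NNPP. intro Hnone.
      assert (L <= L - eps); [|lra].
      apply HLlub. intros y [X [HX ->]]. apply Rnot_lt_le. intro. apply Hnone. eauto. }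
    destruct HX0 as [X0 [HX0 HX0L]]. exists X0. split; [exact HX0|].
    intros X pr HX. rewrite <- RInt_Reals.
    assert (RInt g 1 X <= L) by (apply HLub; exists X; split; [lra | reflexivity]).
    pose proof (Hmono X0 X ltac:(lra)).
    apply Rabs_def1; lra.
  - apply HLlub. intros y [X [HX ->]]. apply Hbd, HX.
Qed.

Lemma RInt_omega w t X :
  w O = 1 -> (forall k, w k <= w (S k)) -> (forall B, exists k, B < w k) ->
  0 < t -> 1 <= X ->
  ex_RInt (fun u => omega w (t * u) / u ^ 2) 1 X /\
  exists J, RInt (fun u => omega w (t * u) / u ^ 2) 1 X
              = sum_from1 (fun j => RInt (fun u => ln_plus (t / w j * u) / u ^ 2) 1 X) J.
Proof.
  intros w_0 w_le_S w_unb Ht HX.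
  assert (w_pos : forall j, 0 < w j) by (intro j; pose proof (weight_ge1 w w_0 w_le_S j); lra).
  destruct (omega_eq_trunc_uniform w w_0 w_le_S w_unb (t * X)) as [J HJ].
  assert (Hext : forall u, Rmin 1 X < u < Rmax 1 X ->
            omega_trunc w (t * u) J / u ^ 2 = omega w (t * u) / u ^ 2).
  { intros u Hu. rewrite Rmin_left, Rmax_right in Hu by lra.
    rewrite HJ; [reflexivity | split; nra]. }
  destruct (RInt_omega_trunc w t w_pos Ht J X HX) as [Hex Heq].
  split; [exact (ex_RInt_ext _ _ _ _ Hext Hex)|].
  exists J. rewrite <- (RInt_ext _ _ _ _ Hext). exact Heq.
Qed.

Lemma one_le_ln_div t m : 0 < m -> m <= t / exp 1 -> 1 <= ln (t / m).
Proof.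
  intros Hm Hle. pose proof (exp_pos 1).
  rewrite <- (ln_exp 1). apply ln_le; [exact (exp_pos 1)|].
  apply (Rle_div_r (exp 1) t m); [exact Hm|].
  rewrite Rmult_comm. apply (Rle_div_r m t (exp 1)); assumption.
Qed.

Section Comparison.

Variables (mu nu : nat -> R) (C : R).
Hypothesis mu_0 : mu O = 1.
Hypothesis mu_le_S : forall k, mu k <= mu (S k).
Hypothesis nu_0 : nu O = 1.
Hypothesis nu_le_S : forall k, nu k <= nu (S k).
Hypothesis mu_le_nu : forall k, mu k <= nu k.
Hypothesis C_pos : 0 < C.

Lemma nu_pos j : 0 < nu j.
Proof. pose proof (weight_ge1 nu nu_0 nu_le_S j). lra. Qed.

Section FixedArgument.

Variables (t : R) (k : nat) (s : R).
Hypothesis t_pos : 0 < t.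
Hypothesis mu_head : forall j, (1 <= j <= k)%nat -> mu j <= t / exp 1.
Hypothesis mu_next : t / exp 1 < mu (S k).
Hypothesis tail_cv : Un_cv (fun n => sum_f_R0 (fun j => / nu (S k + j)%nat) n) s.
Hypothesis tail_le : s <= C * INR (S k) / mu (S k).

Let term_int X j := RInt (fun u => ln_plus (t / nu j * u) / u ^ 2) 1 X.

Lemma term_int_bound X j :
  1 <= X -> 0 <= term_int X j /\ term_int X j <= t / nu j /\
            term_int X j <= ln_plus (t / nu j) + 1.
Proof.
  intro HX. pose proof (nu_pos j) as Hnu.
  assert (Ha : 0 < t / nu j) by (apply Rdiv_lt_0_compat; lra).
  destruct (RInt_ln_plus_scaled_bound (t / nu j) Ha X HX) as [Hlin Hlog].
  split; [|split; assumption].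
  apply RInt_ge_0; [exact HX | apply ex_RInt_ln_plus_scaled; lra |].
  intros u Hu. apply Rdiv_le_0_compat; [apply ln_plus_ge0 | apply pow_lt; lra].
Qed.

Lemma term_int_head X j :
  1 <= X -> (1 <= j <= k)%nat -> term_int X j <= 2 * ln (t / mu j).
Proof.
  intros HX Hj. pose proof (weight_ge1 mu mu_0 mu_le_S j) as Hmu1.
  pose proof (one_le_ln_div t (mu j) ltac:(lra) (mu_head j Hj)) as Hln.
  assert (ln_plus (t / nu j) <= ln (t / mu j)).
  { apply ln_plus_le; [|lra]. pose proof (mu_le_nu j).
    apply ln_le; [apply Rdiv_lt_0_compat; [lra | apply nu_pos]|].
    apply Rmult_le_compat_l; [lra|]. apply Rinv_le_contravar; lra. }
  pose proof (term_int_bound X j HX). lra.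
Qed.

Lemma sum_term_int_le X J :
  1 <= X -> sum_from1 (term_int X) J <= 2 * ln (t ^ k / Mseq mu k) + t * s.
Proof.
  intro HX.
  assert (Htail : forall m, sum_f_R0 (fun j => term_int X (S k + j)%nat) m <= t * s).
  { intro m. apply Rle_trans with (sum_f_R0 (fun j => / nu (S k + j)%nat * t) m).
    - apply sum_Rle. intros j _. destruct (term_int_bound X (S k + j) HX) as [_ [H _]].
      unfold Rdiv in H. lra.
    - rewrite <- scal_sum. apply Rmult_le_compat_l; [lra|].
      apply growing_ineq; [|exact tail_cv]. intro n. simpl.
      pose proof (Rinv_0_lt_compat _ (nu_pos (S (k + S n)))). lra. }
  eapply Rle_trans.
  { apply (sum_from1_le_head_tail (term_int X) k (t * s)); [|exact Htail].
    intro j. apply (term_int_bound X j HX). }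
  rewrite (ln_pow_div_Mseq mu mu_0 mu_le_S) by lra. rewrite <- sum_from1_scal.
  assert (sum_from1 (term_int X) k <= sum_from1 (fun j => 2 * ln (t / mu j)) k)
    by (apply sum_from1_le; intros j Hj; apply term_int_head; assumption).
  lra.
Qed.

Lemma index_le_ln_pow_div_Mseq : INR k <= ln (t ^ k / Mseq mu k).
Proof.
  rewrite (ln_pow_div_Mseq mu mu_0 mu_le_S) by lra.
  rewrite <- (Rmult_1_r (INR k)), <- sum_from1_const. apply sum_from1_le.
  intros j Hj. apply one_le_ln_div; [|exact (mu_head j Hj)].
  pose proof (weight_ge1 mu mu_0 mu_le_S j). lra.
Qed.

Lemma tail_scaled_le : t * s <= C * exp 1 * (INR k + 1).
Proof.
  pose proof (weight_ge1 mu mu_0 mu_le_S (S k)) as Hmu.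
  assert (t * s <= C * INR (S k) * (t / mu (S k))).
  { apply Rle_trans with (t * (C * INR (S k) / mu (S k))).
    - apply Rmult_le_compat_l; lra.
    - right. field. lra. }
  assert (t / mu (S k) <= exp 1).
  { pose proof (exp_pos 1). apply (Rle_div_l t (exp 1) (mu (S k))); [lra|].
    rewrite Rmult_comm. apply (Rle_div_l t (mu (S k)) (exp 1)); lra. }
  rewrite S_INR in *. pose proof (pos_INR k).
  assert (0 <= C * (INR k + 1)) by nra. nra.
Qed.

End FixedArgument.

Hypothesis mu_unbounded : forall B, exists k, B < mu k.
Hypothesis nu_unbounded : forall B, exists k, B < nu k.
Hypothesis nu_tail : forall k : nat, (1 <= k)%nat ->
  exists s, Un_cv (fun n => sum_f_R0 (fun j => / nu (k + j)%nat) n) s /\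
            s <= C * INR k / mu k.

Lemma omega_integral_le t :
  0 < t ->
  exists L, improper_int_1_inf (fun u => omega nu (t * u) / u ^ 2) L /\
            L <= (2 + C * exp 1) * omega mu t + (2 + C * exp 1).
Proof.
  intro Ht.
  destruct (weight_split mu mu_le_S mu_unbounded (t / exp 1)) as [k [Hhead Hnext]].
  destruct (nu_tail (S k) ltac:(lia)) as [s [Hcv Hs]].
  destruct (improper_int_of_bounded (fun u => omega nu (t * u) / u ^ 2)
              (2 * ln (t ^ k / Mseq mu k) + t * s)) as [L [HL HLB]].
  - intros X HX. apply (RInt_omega nu t X nu_0 nu_le_S nu_unbounded Ht HX).
  - intros u Hu. apply Rdiv_le_0_compat; [|apply pow_lt; lra].
    apply (omega_ge0 nu nu_0 nu_le_S nu_unbounded). nra.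
  - intros X HX.
    destruct (RInt_omega nu t X nu_0 nu_le_S nu_unbounded Ht HX) as [_ [J ->]].
    apply (sum_term_int_le t k s); assumption.
  - exists L. split; [exact HL|].
    pose proof (ln_pow_div_Mseq_le_omega mu mu_0 mu_le_S mu_unbounded t k Ht).
    pose proof (omega_ge0 mu mu_0 mu_le_S mu_unbounded t Ht).
    pose proof (index_le_ln_pow_div_Mseq t k Ht Hhead).
    pose proof (tail_scaled_le t k s Ht Hnext Hs).
    assert (0 <= C * exp 1) by (pose proof (exp_pos 1); nra).
    nra.
Qed.

End Comparison.

Theorem lemma5p7 (mu nu : nat -> R) :
  weight_seq mu -> weight_seq nu ->
  (forall k, mu k <= nu k) ->
  (exists C, 0 < C /\ forall k : nat, (1 <= k)%nat ->
     exists s, Un_cv (fun n => sum_f_R0 (fun j => / nu (k + j)%nat) n) s /\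
               s <= C * INR k / mu k) ->
  exists C', 0 < C' /\ forall t, 0 < t ->
    exists L, improper_int_1_inf (fun u => omega nu (t * u) / u ^ 2) L /\
              L <= C' * omega mu t + C'.
Proof.
  intros Wmu Wnu mu_le_nu [C [C_pos nu_tail]].
  pose proof (weight_seq_unbounded mu Wmu) as mu_unbounded.
  pose proof (weight_seq_unbounded nu Wnu) as nu_unbounded.
  destruct Wmu as [mu_0 [mu_le_S _]], Wnu as [nu_0 [nu_le_S _]].
  exists (2 + C * exp 1). split; [pose proof (exp_pos 1); nra|].
  exact (omega_integral_le mu nu C mu_0 mu_le_S nu_0 nu_le_S mu_le_nu C_pos
           mu_unbounded nu_unbounded nu_tail).
Qed.
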